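(* Let $\Omega=\{y\in\mathbb{R}^n: a_i^Ty\le b_i,\ i=1,\ldots,m\}$, let $x\in\Omega$ and $\alpha>0$, and suppose the nearly-active index set $I(x,\alpha)$ has $q\le n$ elements and $\{a_i:i\in I(x,\alpha)\}$ are linearly independent; label them so that $I(x,\alpha)=\{1,\ldots,q\}$ and let $A=[a_1\ \cdots\ a_q]\in\mathbb{R}^{n\times q}$. Let $u_1,\ldots,u_n$ be an orthonormal set of left singular vectors of $A$ with $u_1,\ldots,u_q$ spanning $\operatorname{col}(A)$. For $i=1,\ldots,q$ let $\hat d_i:=-(A^\dagger)^Te_i$, $d_i:=\frac{\alpha}{\|\hat d_i\|}\hat d_i$, and let $\alpha_i$ be the largest value in $[0,1]$ such that $x-\alpha_id_i\in\Omega$. Define $$\mathcal{D}=\{d_1,\ldots,d_q\}\cup\{-\alpha_1d_1,\ldots,-\alpha_qd_q\}\cup\{\pm\alpha u_{q+1},\ldots,\pm\alpha u_n\}.$$ Then $x+d\in\Omega$ for all $d\in\mathcal{D}$, and for all $i=1,\ldots,q$, $$\alpha_i=\min\left(\frac{\|\hat d_i\|s_i}{\alpha},1\right),$$ where $s_i:=b_i-a_i^Tx\ge0$.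
   Context: Nearly-active constraints: $I(x,\alpha):=\{i\in\{1,\ldots,m\}: b_i-\alpha\|a_i\|\le a_i^Tx\}$ (constraints whose boundary hyperplane is within distance $\alpha$ of $x$). $A^\dagger=(A^TA)^{-1}A^T$ is the Moore–Penrose pseudoinverse and $e_i\in\mathbb{R}^q$ the coordinate vectors; $\|\cdot\|$ is the Euclidean norm. *)

From mathcomp Require Import all_boot all_order all_algebra.
Set Implicit Arguments. Unset Strict Implicit. Unset Printing Implicit Defensive.
Import Order.TTheory GRing.Theory Num.Theory.
Local Open Scope ring_scope.

Definition dotv {R : numDomainType} {n : nat} (u v : 'cV[R]_n) : R :=
  \sum_(j < n) u j 0 * v j 0.
Definition normv {R : rcfType} {n : nat} (v : 'cV[R]_n) : R :=
  Num.sqrt (dotv v v).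

Definition in_Omega {R : numDomainType} {n m : nat}
  (a : 'I_m -> 'cV[R]_n) (b : 'I_m -> R) (y : 'cV[R]_n) : Prop :=
  forall i : 'I_m, dotv (a i) y <= b i.

Definition nearly_active {R : rcfType} {n m : nat}
  (a : 'I_m -> 'cV[R]_n) (b : 'I_m -> R) (x : 'cV[R]_n) (alpha : R) (i : 'I_m) : Prop :=
  b i - alpha * normv (a i) <= dotv (a i) x.

Definition constr_mx {R : numDomainType} {n m q : nat}
  (a : 'I_m -> 'cV[R]_n) (idx : 'I_q -> 'I_m) : 'M[R]_(n, q) :=
  \matrix_(j < n, k < q) a (idx k) j 0.

Definition pinv {R : fieldType} {n q : nat} (A : 'M[R]_(n, q)) : 'M[R]_(q, n) :=
  invmx (A^T *m A) *m A^T.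

Definition left_singular_vectors {R : numDomainType} {n q : nat}
  (A : 'M[R]_(n, q)) (U : 'M[R]_n) : Prop :=
  U^T *m U = 1%:M /\
  exists (S : 'M[R]_(n, q)) (V : 'M[R]_q),
    V^T *m V = 1%:M /\
    (forall (i : 'I_n) (j : 'I_q), (i : nat) <> (j : nat) -> S i j = 0) /\
    (forall (i : 'I_n) (j : 'I_q), 0 <= S i j) /\
    A = U *m S *m V^T.

(* Matrix whose rows are u_0^T, ..., u_{q-1}^T (columns of U), other rows zero;
   its row space is span{u_0, ..., u_{q-1}}. *)
Definition first_cols {R : numDomainType} {n : nat} (q : nat) (U : 'M[R]_n) : 'M[R]_n :=
  \matrix_(k < n, j < n) (if (k < q)%N then U j k else 0).

Definition dhat {R : fieldType} {n q : nat} (A : 'M[R]_(n, q)) (i : 'I_q) : 'cV[R]_n :=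
  - ((pinv A)^T *m delta_mx i (0 : 'I_1)).

Definition dir {R : rcfType} {n q : nat} (alpha : R) (A : 'M[R]_(n, q)) (i : 'I_q)
  : 'cV[R]_n :=
  (alpha / normv (dhat A i)) *: dhat A i.

Definition is_largest_step {R : numDomainType} {n m : nat}
  (a : 'I_m -> 'cV[R]_n) (b : 'I_m -> R) (x d : 'cV[R]_n) (t : R) : Prop :=
  [/\ 0 <= t <= 1, in_Omega a b (x - t *: d) &
      forall t' : R, 0 <= t' <= 1 -> in_Omega a b (x - t' *: d) -> t' <= t].

(* membership in the set D (indices 0-based: u_{q+1..n} are columns k >= q of U) *)
Definition in_D {R : rcfType} {n q : nat} (alpha : R) (A : 'M[R]_(n, q))
  (U : 'M[R]_n) (alphas : 'I_q -> R) (d : 'cV[R]_n) : Prop :=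
  (exists i : 'I_q, d = dir alpha A i) \/
  (exists i : 'I_q, d = - (alphas i *: dir alpha A i)) \/
  (exists k : 'I_n, (q <= k)%N /\ (d = alpha *: col k U \/ d = - (alpha *: col k U))).

From mathcomp Require Import all_boot all_order all_algebra.
From mathcomp Require Import ring lra.
Import Order.TTheory GRing.Theory Num.Theory.
Local Open Scope ring_scope.

(* A constraint that is not nearly active at x has slack larger than
   alpha * ||a_j||, so by Cauchy-Schwarz no step of length at most alpha can
   violate it: only the constraints a_(idx k) matter.  Since
   A^T dhat_i = -e_i, the step d_i lowers a_(idx i)^T x by alpha / ||dhat_i||
   and leaves the other a_(idx k)^T x unchanged, while the u_k with k >= q are
   orthogonal to every a_(idx k).  Hence x + d is feasible for every d in D,
   and x - t d_i is feasible exactly when t alpha / ||dhat_i|| <= s_i, which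
   forces alpha_i = min (||dhat_i|| s_i / alpha, 1). *)

Section InnerProduct.
Context {R : rcfType} {n : nat}.
Implicit Types u v w : 'cV[R]_n.

Lemma dotvE u v : dotv u v = (u^T *m v) 0 0.
Proof. by rewrite mxE; apply: eq_bigr => j _; rewrite mxE. Qed.

Lemma dotvC u v : dotv u v = dotv v u.
Proof. by apply: eq_bigr => j _; rewrite mulrC. Qed.

Lemma dotvDr u v w : dotv u (v + w) = dotv u v + dotv u w.
Proof. by rewrite !dotvE mulmxDr mxE. Qed.

Lemma dotvZr u (c : R) v : dotv u (c *: v) = c * dotv u v.
Proof. by rewrite !dotvE -scalemxAr mxE. Qed.

Lemma dotvBr u v w : dotv u (v - w) = dotv u v - dotv u w.
Proof. by rewrite dotvDr -scaleN1r dotvZr mulN1r. Qed.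

Lemma dotvZl u (c : R) v : dotv (c *: v) u = c * dotv v u.
Proof. by rewrite dotvC dotvZr dotvC. Qed.

Lemma dotvBl u v w : dotv (v - w) u = dotv v u - dotv w u.
Proof. by rewrite dotvC dotvBr !(dotvC u). Qed.

Lemma dotv0 u : dotv u 0 = 0.
Proof. by rewrite /dotv big1 // => j _; rewrite mxE mulr0. Qed.

Lemma dotv_ge0 v : 0 <= dotv v v.
Proof. by apply: sumr_ge0 => j _; rewrite -expr2 sqr_ge0. Qed.

Lemma dotv_eq0 v : (dotv v v == 0) = (v == 0).
Proof.
apply/eqP/eqP => [v0|->]; last exact: dotv0.
apply/colP => j; rewrite mxE.
have /(_ j isT) /eqP := psumr_eq0P (fun i _ => sqr_ge0 (v i 0)) v0.
by rewrite mulf_eq0 orbb => /eqP.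
Qed.

Lemma normv_ge0 v : 0 <= normv v.
Proof. exact: sqrtr_ge0. Qed.

Lemma normv_gt0 v : (0 < normv v) = (v != 0).
Proof. by rewrite sqrtr_gt0 lt0r dotv_eq0 dotv_ge0 andbT. Qed.

Lemma normvZ (c : R) v : normv (c *: v) = `|c| * normv v.
Proof. by rewrite /normv dotvZl dotvZr mulrA -expr2 sqrtrM ?sqr_ge0 // sqrtr_sqr. Qed.

Lemma dotv_sqr_le u v : dotv u v ^+ 2 <= dotv u u * dotv v v.
Proof.
have [/eqP v0|vn0] := eqVneq (dotv v v) 0.
  by move: v0; rewrite dotv_eq0 => /eqP->; rewrite !dotv0 expr0n mulr0.
have vv_gt0 : 0 < dotv v v by rewrite lt0r vn0 dotv_ge0.
have := dotv_ge0 (dotv v v *: u - dotv u v *: v).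
rewrite !(dotvBl, dotvBr, dotvZl, dotvZr) (dotvC v u).
have -> : dotv v v * (dotv v v * dotv u u) - dotv v v * (dotv u v * dotv u v) -
     (dotv u v * (dotv v v * dotv u v) - dotv u v * (dotv u v * dotv v v))
   = dotv v v * (dotv u u * dotv v v - dotv u v ^+ 2) by ring.
by rewrite pmulr_rge0 // subr_ge0.
Qed.

Lemma dotv_le_normv u v : dotv u v <= normv u * normv v.
Proof.
apply: le_trans (ler_norm _) _.
rewrite -sqrtr_sqr /normv -sqrtrM ?dotv_ge0 //.
by rewrite ler_sqrt ?dotv_sqr_le // mulr_ge0 ?dotv_ge0.
Qed.

End InnerProduct.

Lemma dotv_col_mul (R : rcfType) n p (M : 'M[R]_(n, p)) k v :
  dotv (col k M) v = (M^T *m v) k 0.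
Proof. by rewrite /dotv !mxE; apply: eq_bigr => j _; rewrite !mxE. Qed.

Lemma col_constr_mx (R : rcfType) n m q (a : 'I_m -> 'cV[R]_n) (idx : 'I_q -> 'I_m) k :
  col k (constr_mx a idx) = a (idx k).
Proof. by apply/colP => j; rewrite !mxE. Qed.

Section ShortSteps.
Context {R : rcfType} {n m : nat} {a : 'I_m -> 'cV[R]_n} {b : 'I_m -> R} {x : 'cV[R]_n}.
Variable alpha : R.

Lemma in_Omega_short_step d :
  normv d <= alpha ->
  (forall j, nearly_active a b x alpha j -> dotv (a j) (x + d) <= b j) ->
  in_Omega a b (x + d).
Proof.
move=> d_le hact j; have [/hact //|far] := leP (b j - alpha * normv (a j)) (dotv (a j) x).
have := dotv_le_normv (a j) d; have := normv_ge0 (a j).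
rewrite dotvDr; nra.
Qed.

Lemma in_Omega_short_descent_step d :
  in_Omega a b x -> normv d <= alpha ->
  (forall j, nearly_active a b x alpha j -> dotv (a j) d <= 0) ->
  in_Omega a b (x + d).
Proof.
move=> hx d_le hd; apply: in_Omega_short_step => // j /hd.
by rewrite dotvDr; have := hx j; lra.
Qed.

End ShortSteps.

Section Pseudoinverse.
Context {R : rcfType} {n q : nat} (A : 'M[R]_(n, q)).
Hypothesis A_full : row_full A.

Lemma unitmx_gram : A^T *m A \in unitmx.
Proof.
rewrite -row_free_unit -kermx_eq0; apply/eqP/row_matrixP => i; rewrite row0.
set w := row i _.
have wAtA : w *m (A^T *m A) = 0 by apply/sub_kermxP; rewrite row_sub.
have At_free : row_free A^T by rewrite /row_free mxrank_tr.
apply/eqP; rewrite -(mulmx_free_eq0 _ At_free) -trmx_eq0 -dotv_eq0 dotvE trmxK.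
by rewrite trmx_mul trmxK mulmxA -(mulmxA w) wAtA mul0mx mxE.
Qed.

Lemma trmx_mul_dhat i : A^T *m dhat A i = - delta_mx i 0.
Proof.
rewrite /dhat mulmxN /pinv trmx_mul trmxK trmx_inv trmx_mul trmxK.
by rewrite !mulmxA mulmxV ?unitmx_gram // mul1mx.
Qed.

Lemma dhat_neq0 i : dhat A i != 0.
Proof.
apply/eqP => d0; have /matrixP/(_ i 0) := trmx_mul_dhat i.
by rewrite d0 mulmx0 !mxE !eqxx => /eqP; rewrite eq_sym oppr_eq0 oner_eq0.
Qed.

Lemma normv_dir alpha i : 0 <= alpha -> normv (dir alpha A i) = alpha.
Proof.
move=> alpha_ge0; have N_gt0 : 0 < normv (dhat A i) by rewrite normv_gt0 dhat_neq0.
by rewrite /dir normvZ ger0_norm ?divr_ge0 ?normv_ge0 // divfK ?gt_eqF.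
Qed.

Lemma dotv_col_dir alpha k i :
  dotv (col k A) (dir alpha A i) = - (alpha / normv (dhat A i)) * (k == i)%:R.
Proof. by rewrite /dir dotvZr dotv_col_mul trmx_mul_dhat !mxE eqxx andbT mulrN mulNr. Qed.

End Pseudoinverse.

Section OrthogonalMatrix.
Context {R : rcfType} {n : nat} (U : 'M[R]_n).
Hypothesis UtU : U^T *m U = 1%:M.

Lemma normv_col_orthogonal k : normv (col k U) = 1.
Proof. by rewrite /normv dotv_col_mul colE mulmxA UtU mul1mx mxE !eqxx sqrtr1. Qed.

Lemma first_cols_mul_col q (k : 'I_n) : (q <= k)%N -> first_cols q U *m col k U = 0.
Proof.
move=> qk; apply/matrixP => l z; rewrite !mxE.
case: (ltnP l q) => [lq|ql]; last by apply: big1 => j _; rewrite !mxE ltnNge ql mul0r.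
have /matrixP/(_ l k) := UtU; rewrite !mxE.
have -> : (l == k) = false by apply/negbTE; rewrite neq_ltn (leq_trans lq qk).
by rewrite mulr0n => UtU_lk; rewrite -[RHS]UtU_lk; apply: eq_bigr => j _; rewrite !mxE lq.
Qed.

End OrthogonalMatrix.

Lemma is_largest_step_min (R : realDomainType) n m (a : 'I_m -> 'cV[R]_n) b x d t c :
  0 <= c ->
  (forall t', 0 <= t' <= 1 -> in_Omega a b (x - t' *: d) <-> t' <= c) ->
  is_largest_step a b x d t -> t = Num.min c 1.
Proof.
move=> c_ge0 feas [/andP[t_ge0 t_le1] x_in t_max].
have min_01 : 0 <= Num.min c 1 <= 1 by rewrite le_min c_ge0 ler01 ge_min lexx orbT.
have t_le_c : t <= c by apply/(feas t); rewrite ?t_ge0.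
apply/le_anti; rewrite le_min t_le_c t_le1 /=.
by apply: t_max => //; apply/feas; rewrite // ge_min lexx.
Qed.

Section NearlyActiveSteps.
Context {R : rcfType} {n m q : nat} {a : 'I_m -> 'cV[R]_n} {b : 'I_m -> R}.
Context {x : 'cV[R]_n} {alpha : R} {idx : 'I_q -> 'I_m}.
Hypotheses (x_in : in_Omega a b x) (alpha_gt0 : 0 < alpha).
Hypothesis A_full : row_full (constr_mx a idx).
Hypothesis nearly_active_idx :
  forall j, nearly_active a b x alpha j -> exists k, j = idx k.
Local Notation A := (constr_mx a idx).

Lemma dotv_dir k i :
  dotv (a (idx k)) (dir alpha A i) = - (alpha / normv (dhat A i)) * (k == i)%:R.
Proof. by rewrite -col_constr_mx dotv_col_dir. Qed.

Lemma in_Omega_add_dir i : in_Omega a b (x + dir alpha A i).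
Proof.
apply: (in_Omega_short_descent_step alpha) => //.
  by rewrite normv_dir // ltW.
move=> _ /nearly_active_idx [k ->]; rewrite dotv_dir mulNr oppr_le0.
by rewrite mulr_ge0 ?ler0n ?divr_ge0 ?normv_ge0 ?ltW.
Qed.

Lemma in_Omega_add_orth v : A^T *m v = 0 -> normv v <= alpha -> in_Omega a b (x + v).
Proof.
move=> Av0 v_le.
apply: (in_Omega_short_descent_step alpha) => // _ /nearly_active_idx [k ->].
by rewrite -col_constr_mx dotv_col_mul Av0 mxE.
Qed.

Lemma in_Omega_sub_dirP i t : 0 <= t <= 1 ->
  in_Omega a b (x - t *: dir alpha A i) <->
  t <= normv (dhat A i) * (b (idx i) - dotv (a (idx i)) x) / alpha.
Proof.
case/andP=> t_ge0 t_le1.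
set N := normv (dhat A i); set s := b (idx i) - _.
have N_gt0 : 0 < N by rewrite normv_gt0 dhat_neq0.
have dotv_step k : dotv (a (idx k)) (x - t *: dir alpha A i)
    = dotv (a (idx k)) x + t * (alpha / N) * (k == i)%:R.
  by rewrite dotvBr dotvZr dotv_dir; ring.
have -> : (t <= N * s / alpha) = (t * (alpha / N) <= s).
  by rewrite ler_pdivlMr // mulrA ler_pdivrMr // [s * N]mulrC.
split=> [/(_ (idx i))|t_le].
  by rewrite dotv_step eqxx mulr1 /s; lra.
rewrite -scaleNr; apply: (in_Omega_short_step alpha).
  by rewrite normvZ normrN ger0_norm // normv_dir ?ler_piMl // ltW.
move=> _ /nearly_active_idx [k ->]; rewrite scaleNr dotv_step.
have := x_in (idx k); have [->|_] := eqVneq k i; last by rewrite mulr0 addr0.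
by rewrite mulr1 /s in t_le *; lra.
Qed.

End NearlyActiveSteps.

Theorem lemma5p7 (R : rcfType) (n m q : nat)
  (a : 'I_m -> 'cV[R]_n) (b : 'I_m -> R) (x : 'cV[R]_n) (alpha : R)
  (idx : 'I_q -> 'I_m) (U : 'M[R]_n) (alphas : 'I_q -> R) :
  in_Omega a b x ->
  0 < alpha ->
  (q <= n)%N ->
  injective idx ->
  (forall i : 'I_m, nearly_active a b x alpha i <-> exists k : 'I_q, i = idx k) ->
  \rank (constr_mx a idx) = q ->
  left_singular_vectors (constr_mx a idx) U ->
  (first_cols q U == (constr_mx a idx)^T)%MS ->
  (forall i : 'I_q, is_largest_step a b x (dir alpha (constr_mx a idx) i) (alphas i)) ->
  (forall d : 'cV[R]_n, in_D alpha (constr_mx a idx) U alphas d -> in_Omega a b (x + d)) /\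
  (forall i : 'I_q,
     0 <= b (idx i) - dotv (a (idx i)) x /\
     alphas i = Num.min (normv (dhat (constr_mx a idx) i) * (b (idx i) - dotv (a (idx i)) x) / alpha) 1).
Proof.
move=> x_in alpha_gt0 _ _ I_idx rankA [UtU _] colsU alphas_max.
have A_full : row_full (constr_mx a idx) by rewrite /row_full rankA.
have active j := (I_idx j).1.
have orth (k : 'I_n) : (q <= k)%N -> (constr_mx a idx)^T *m (alpha *: col k U) = 0.
  case/andP: colsU => _ /submxP [D ->] qk.
  by rewrite -scalemxAr -mulmxA first_cols_mul_col ?mulmx0 ?scaler0.
have normv_u (k : 'I_n) : normv (alpha *: col k U) = alpha.
  by rewrite normvZ normv_col_orthogonal // mulr1 gtr0_norm.
split.
  move=> d [[i ->]|[[i ->]|[k [qk [->|->]]]]].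
  - exact: (in_Omega_add_dir x_in alpha_gt0 A_full active).
  - by case: (alphas_max i).
  - by apply: (in_Omega_add_orth x_in active); rewrite ?orth ?normv_u.
  - apply: (in_Omega_add_orth x_in active); first by rewrite mulmxN orth ?oppr0.
    by rewrite -scaleN1r normvZ normrN1 mul1r normv_u.
move=> i; have s_ge0 : 0 <= b (idx i) - dotv (a (idx i)) x by rewrite subr_ge0.
split=> //; apply: is_largest_step_min (alphas_max i).
  by rewrite divr_ge0 ?mulr_ge0 ?normv_ge0 // ltW.
exact: (in_Omega_sub_dirP x_in alpha_gt0 A_full active i).
Qed.
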